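(* Let $b_x,b_y,u_x,u_y,K,\beta,e$ be positive constants with $u_y>u_x$ and $b_x\geq b_y+e$, and consider the system \[ \frac{dX}{dt}=\Big[b_x\Big(1-\frac{X+Y}{K}\Big)-u_x-\beta Y\Big]X+e\Big(1-\frac{X+Y}{K}\Big)Y,\qquad \frac{dY}{dt}=\Big[b_y\Big(1-\frac{X+Y}{K}\Big)-u_y+\beta X\Big]Y . \] Let $E_0=(0,0)$, $E_1=(\bar X,0)$ with $\bar X=K(1-u_x/b_x)$, and $E^*=(X^*,Y^* )$ with \[ X^*=\frac{-B+\sqrt{B^2-4AC}}{2A},\qquad Y^*=\frac{(\beta K-b_y)X^*}{b_y}+\frac{K(b_y-u_y)}{b_y}, \] where \[ A=\frac{\beta K}{b_y^2}\{b_y(b_x-b_y-e)+\beta K(b_y+e)\}, \] \[ B=-K(b_x-u_x)+K(b_x+\beta K+e)\frac{b_y-u_y}{b_y}+2eK\frac{(\beta K-b_y)(b_y-u_y)}{b_y^2}-\frac{eK(\beta K-b_y)}{b_y}, \] \[ C=-\frac{eK^2(b_y-u_y)u_y}{b_y^2}. \] Define $V_0=\frac{b_y}{b_x}\frac{u_x}{u_y}$, $H_0=\frac{\beta}{u_y}K\left(1-\frac{u_x}{b_x}\right)$ and $R_0=V_0+H_0$. Then: (i) $E_0$ is locally asymptotically stable if $b_x<u_x$ and $b_y<u_y$; (ii) if $b_x>u_x$, then $E_1$ is locally asymptotically stable when $R_0<1$ and unstable when $R_0>1$; (iii) $E^*$ is locally asymptotically stable if $b_x>u_x$, $b_y>u_y$,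 $b_y>\beta K$ and $\frac{K}{X^*}>\frac{b_y-\beta K}{b_y-u_y}$.
   Context: $X$ and $Y$ denote densities of uninfected and infected hosts; $b_x,b_y$ are birth rates, $u_x,u_y$ death rates, $K$ carrying capacity, $\beta$ the horizontal transmission coefficient, and $e$ the rate at which infected hosts produce uninfected offspring. The paper assumes throughout that $u_y>u_x$ and $b_x\geq b_y+e$. Local asymptotic stability of an equilibrium is in the usual sense for ODEs (both eigenvalues of the Jacobian at the equilibrium have negative real part). *)

From Stdlib Require Import Reals.
From Coquelicot Require Import Coquelicot.
Open Scope R_scope.

Definition fX (bx bY ux uy K beta e : R) (X Y : R) : R :=
  (bx * (1 - (X + Y) / K) - ux - beta * Y) * X + e * (1 - (X + Y) / K) * Y.
Definition fY (bx bY ux uy K beta e : R) (X Y : R) : R :=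
  (bY * (1 - (X + Y) / K) - uy + beta * X) * Y.

Definition mat2 := ((R * R) * (R * R))%type.

Definition jacobian (f g : R -> R -> R) (x y : R) : mat2 :=
  ((Derive (fun s => f s y) x, Derive (fun t => f x t) y),
   (Derive (fun s => g s y) x, Derive (fun t => g x t) y)).

Definition is_eigenvalue (J : mat2) (l : C) : Prop :=
  let '((a, b), (c, d)) := J in
  Cminus (Cmult (Cminus (RtoC a) l) (Cminus (RtoC d) l)) (Cmult (RtoC b) (RtoC c)) = RtoC 0.

Definition is_equilibrium (f g : R -> R -> R) (x y : R) : Prop :=
  f x y = 0 /\ g x y = 0.

Definition loc_asym_stable (f g : R -> R -> R) (x y : R) : Prop :=
  is_equilibrium f g x y /\
  forall l, is_eigenvalue (jacobian f g x y) l -> Re l < 0.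

Definition unstable (f g : R -> R -> R) (x y : R) : Prop :=
  is_equilibrium f g x y /\
  exists l, is_eigenvalue (jacobian f g x y) l /\ 0 < Re l.

Definition coefA (bx bY ux uy K beta e : R) : R :=
  beta * K / (bY ^ 2) * (bY * (bx - bY - e) + beta * K * (bY + e)).
Definition coefB (bx bY ux uy K beta e : R) : R :=
  - K * (bx - ux) + K * (bx + beta * K + e) * ((bY - uy) / bY)
  + 2 * e * K * ((beta * K - bY) * (bY - uy) / (bY ^ 2))
  - e * K * (beta * K - bY) / bY.
Definition coefC (bx bY ux uy K beta e : R) : R :=
  - (e * K ^ 2 * (bY - uy) * uy / (bY ^ 2)).

Definition Xstar (bx bY ux uy K beta e : R) : R :=
  let A := coefA bx bY ux uy K beta e in
  let B := coefB bx bY ux uy K beta e in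
  let C0 := coefC bx bY ux uy K beta e in
  (- B + sqrt (B ^ 2 - 4 * A * C0)) / (2 * A).
Definition Ystar (bx bY ux uy K beta e : R) : R :=
  (beta * K - bY) * Xstar bx bY ux uy K beta e / bY + K * (bY - uy) / bY.

Definition Xbar (bx bY ux uy K beta e : R) : R := K * (1 - ux / bx).

Definition V0 (bx bY ux uy K beta e : R) : R := (bY / bx) * (ux / uy).
Definition H0 (bx bY ux uy K beta e : R) : R := beta / uy * K * (1 - ux / bx).
Definition Rnought (bx bY ux uy K beta e : R) : R :=
  V0 bx bY ux uy K beta e + H0 bx bY ux uy K beta e.

From Stdlib Require Import Reals Lra Psatz.
From Coquelicot Require Import Coquelicot.
Open Scope R_scope.

(** For a real 2x2 matrix, every eigenvalue has negative real part as soon as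
    the trace is negative and the determinant positive (Routh–Hurwitz).  At
    [E0] and [E1] the Jacobian is triangular, its diagonal at [E1] being
    [-(bx - ux)] and [uy (R0 - 1)].  At any positive interior equilibrium the
    equilibrium equations eliminate the per-capita growth rates, after which
    the trace is a sum of negative terms and the determinant is [y/K] times a
    sum of positive terms, provided [bY > beta K].  Finally, along the
    [Y]-nullcline [fX] equals [-(A X^2 + B X + C)/K]; since [A > 0 > C], [X*]
    is the positive root of this quadratic, and the last hypothesis of (iii)
    says exactly that [Y* > 0]. *)

Definition mat2_tr (J : mat2) : R := let '((a, _), (_, d)) := J in a + d.
Definition mat2_det (J : mat2) : R := let '((a, b), (c, d)) := J in a * d - b * c.

Lemma Re_eigenvalue_lt0 (J : mat2) (l : C) :
  mat2_tr J < 0 -> 0 < mat2_det J -> is_eigenvalue J l -> Re l < 0.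
Proof.
  destruct J as [[a b] [c d]], l as [x y]; simpl; intros Htr Hdet Heig.
  pose proof (f_equal fst Heig) as Hre; pose proof (f_equal snd Heig) as Him.
  simpl in Hre, Him.
  destruct (Req_dec y 0) as [-> | Hy].
  - nra.
  - assert (Hx : a + d - 2 * x = 0) by (apply (Rmult_eq_reg_l y); [nra | exact Hy]).
    lra.
Qed.

Lemma is_eigenvalue_upper_triangular (a b d : R) :
  is_eigenvalue ((a, b), (0, d)) (RtoC d).
Proof. apply injective_projections; simpl; ring. Qed.

Lemma loc_asym_stable_of_tr_det (f g : R -> R -> R) (x y : R) :
  is_equilibrium f g x y ->
  mat2_tr (jacobian f g x y) < 0 -> 0 < mat2_det (jacobian f g x y) ->
  loc_asym_stable f g x y.
Proof. intros Heq Htr Hdet; split; [exact Heq |]; intros l; now apply Re_eigenvalue_lt0. Qed.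

Lemma quadratic_root (A B C0 : R) :
  A <> 0 -> 0 <= B ^ 2 - 4 * A * C0 ->
  let r := (- B + sqrt (B ^ 2 - 4 * A * C0)) / (2 * A) in
  A * r ^ 2 + B * r + C0 = 0.
Proof.
  intros HA HD r; unfold r.
  pose proof (sqrt_sqrt _ HD) as Hsq.
  set (sq := sqrt (B ^ 2 - 4 * A * C0)) in *.
  field_simplify; [| exact HA].
  replace (sq ^ 2) with (sq * sq) by ring; rewrite Hsq; field; exact HA.
Qed.

Lemma quadratic_root_pos (A B C0 : R) :
  0 < A -> C0 < 0 -> 0 < (- B + sqrt (B ^ 2 - 4 * A * C0)) / (2 * A).
Proof.
  intros HA HC.
  assert (HD : B ^ 2 < B ^ 2 - 4 * A * C0) by nra.
  pose proof (sqrt_sqrt _ (Rlt_le _ _ (Rle_lt_trans _ _ _ (pow2_ge_0 B) HD))) as Hsq.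
  pose proof (sqrt_pos (B ^ 2 - 4 * A * C0)).
  apply Rdiv_lt_0_compat; nra.
Qed.

Section Model.

Variables bx bY ux uy K beta e : R.
Hypotheses (hbx : 0 < bx) (hbY : 0 < bY) (hux : 0 < ux) (huy : 0 < uy)
  (hK : 0 < K) (hbeta : 0 < beta) (he : 0 < e).

Local Notation f := (fX bx bY ux uy K beta e).
Local Notation g := (fY bx bY ux uy K beta e).

Lemma jacobian_model (x y : R) :
  jacobian f g x y =
  ((bx * (1 - (x + y) / K) - ux - beta * y - bx * x / K - e * y / K,
    - bx * x / K - beta * x + e * (1 - (x + y) / K) - e * y / K),
   ((beta - bY / K) * y,
    bY * (1 - (x + y) / K) - uy + beta * x - bY * y / K)).
Proof.
  unfold jacobian; f_equal; f_equal; apply is_derive_unique; unfold fX, fY;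
    auto_derive; trivial; field; lra.
Qed.

Lemma origin_loc_asym_stable : bx < ux -> bY < uy -> loc_asym_stable f g 0 0.
Proof.
  intros Hx Hy; apply loc_asym_stable_of_tr_det.
  - split; unfold fX, fY; ring.
  - rewrite jacobian_model; simpl; replace ((0 + 0) / K) with 0 by (field; lra); lra.
  - rewrite jacobian_model; simpl; replace ((0 + 0) / K) with 0 by (field; lra); nra.
Qed.

Local Notation Xb := (Xbar bx bY ux uy K beta e).
Local Notation R_0 := (Rnought bx bY ux uy K beta e).

Lemma Xbar_slack : 1 - (Xb + 0) / K = ux / bx.
Proof. unfold Xbar; field; lra. Qed.

Lemma Xbar_is_equilibrium : is_equilibrium f g Xb 0.
Proof.
  split; unfold fX, fY; rewrite Xbar_slack; [| ring].
  unfold Xbar; field; lra.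
Qed.

Lemma jacobian_Xbar :
  jacobian f g Xb 0 =
  ((- (bx - ux), - (bx - ux) - beta * Xb + e * (ux / bx)), (0, uy * (R_0 - 1))).
Proof.
  rewrite jacobian_model, Xbar_slack.
  unfold Rnought, V0, H0, Xbar; f_equal; f_equal; field; lra.
Qed.

Lemma Xbar_loc_asym_stable : ux < bx -> R_0 < 1 -> loc_asym_stable f g Xb 0.
Proof.
  intros Hx HR; apply loc_asym_stable_of_tr_det; [exact Xbar_is_equilibrium | |];
    rewrite jacobian_Xbar; simpl.
  - nra.
  - assert (0 < (bx - ux) * (uy * (1 - R_0))) by (apply Rmult_lt_0_compat; nra).
    lra.
Qed.

Lemma Xbar_unstable : 1 < R_0 -> unstable f g Xb 0.
Proof.
  intros HR; split; [exact Xbar_is_equilibrium |].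
  exists (RtoC (uy * (R_0 - 1))); split.
  - rewrite jacobian_Xbar; apply is_eigenvalue_upper_triangular.
  - simpl; nra.
Qed.

Lemma interior_slack_pos (x y : R) :
  0 < x -> 0 < y -> f x y = 0 -> 0 < 1 - (x + y) / K.
Proof.
  unfold fX; set (s := 1 - (x + y) / K); intros Hx Hy HfX.
  destruct (Rlt_or_le 0 s) as [Hs | Hs]; [exact Hs | exfalso].
  assert (bx * s - ux - beta * y < 0) by nra.
  assert (e * s <= 0) by nra.
  assert (e * s * y <= 0) by nra.
  nra.
Qed.

Lemma interior_equilibrium_loc_asym_stable (x y : R) :
  bY <= bx -> beta * K < bY -> 0 < x -> 0 < y -> is_equilibrium f g x y ->
  loc_asym_stable f g x y.
Proof.
  intros HbxY HbK Hx Hy [HfX HfY].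
  pose proof (interior_slack_pos x y Hx Hy HfX) as Hs.
  unfold fX, fY in HfX, HfY; set (s := 1 - (x + y) / K) in *.
  assert (HrY : bY * s - uy + beta * x = 0) by (apply (Rmult_eq_reg_r y); lra).
  assert (HrX : bx * s - ux - beta * y = - (e * s * y / x))
    by (apply (Rmult_eq_reg_r x); [field_simplify; lra | lra]).
  assert (Hesy : 0 < e * s * y / x)
    by (apply Rdiv_lt_0_compat; [repeat apply Rmult_lt_0_compat |]; lra).
  apply loc_asym_stable_of_tr_det; [split; unfold fX, fY; fold s; assumption | |];
    rewrite jacobian_model; simpl; fold s.
  - assert (0 < bx * x / K) by (apply Rdiv_lt_0_compat; nra).
    assert (0 < e * y / K) by (apply Rdiv_lt_0_compat; nra).
    assert (0 < bY * y / K) by (apply Rdiv_lt_0_compat; nra).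
    lra.
  - rewrite HrX, HrY.
    replace ((- (e * s * y / x) - bx * x / K - e * y / K) * (0 - bY * y / K)
             - (- bx * x / K - beta * x + e * s - e * y / K) * ((beta - bY / K) * y))
      with (y / K * (bY * (e * s * y / x) + beta * x * (bx - bY + beta * K)
                     + beta * e * y + (bY - beta * K) * e * s))
      by (field; lra).
    apply Rmult_lt_0_compat; [apply Rdiv_lt_0_compat; lra |].
    assert (0 < beta * x * (bx - bY + beta * K)) by (apply Rmult_lt_0_compat; nra).
    assert (0 < (bY - beta * K) * e * s) by (apply Rmult_lt_0_compat; nra).
    assert (0 < bY * (e * s * y / x)) by (apply Rmult_lt_0_compat; lra).
    assert (0 < beta * e * y) by (repeat apply Rmult_lt_0_compat; lra).
    lra.
Qed.

Definition Y_nullcline (x : R) : R := (beta * K - bY) * x / bY + K * (bY - uy) / bY.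

Local Notation A := (coefA bx bY ux uy K beta e).
Local Notation B := (coefB bx bY ux uy K beta e).
Local Notation C0 := (coefC bx bY ux uy K beta e).
Local Notation Xs := (Xstar bx bY ux uy K beta e).

Lemma fY_Y_nullcline (x : R) : g x (Y_nullcline x) = 0.
Proof. unfold fY, Y_nullcline; field; lra. Qed.

Lemma fX_Y_nullcline (x : R) : f x (Y_nullcline x) = - (A * x ^ 2 + B * x + C0) / K.
Proof. unfold fX, Y_nullcline, coefA, coefB, coefC; field; lra. Qed.

Lemma coefA_pos : bY + e <= bx -> 0 < A.
Proof.
  intros Hbx; unfold coefA.
  apply Rmult_lt_0_compat; [apply Rdiv_lt_0_compat; nra |].
  assert (0 < beta * K * (bY + e)) by (apply Rmult_lt_0_compat; nra).
  nra.
Qed.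

Lemma coefC_neg : uy < bY -> C0 < 0.
Proof.
  intros Hy; unfold coefC.
  assert (0 < e * K ^ 2 * (bY - uy) * uy) by (repeat apply Rmult_lt_0_compat; nra).
  assert (0 < e * K ^ 2 * (bY - uy) * uy / bY ^ 2) by (apply Rdiv_lt_0_compat; nra).
  lra.
Qed.

Lemma Xstar_pos : bY + e <= bx -> uy < bY -> 0 < Xs.
Proof. intros Hbx Hy; apply quadratic_root_pos; [apply coefA_pos | apply coefC_neg]; assumption. Qed.

Lemma Xstar_Ystar_is_equilibrium :
  bY + e <= bx -> uy < bY ->
  is_equilibrium f g Xs (Ystar bx bY ux uy K beta e).
Proof.
  intros Hbx Hy; pose proof (coefA_pos Hbx) as HA; pose proof (coefC_neg Hy) as HC.
  change (Ystar bx bY ux uy K beta e) with (Y_nullcline Xs).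
  split; [| apply fY_Y_nullcline].
  rewrite fX_Y_nullcline; unfold Xstar.
  rewrite (quadratic_root A B C0); [field; lra | lra | nra].
Qed.

Lemma Ystar_pos :
  bY + e <= bx -> uy < bY -> (bY - beta * K) / (bY - uy) < K / Xs ->
  0 < Ystar bx bY ux uy K beta e.
Proof.
  intros Hbx Hy Hcond; pose proof (Xstar_pos Hbx Hy) as HX.
  change (Ystar bx bY ux uy K beta e) with (Y_nullcline Xs); unfold Y_nullcline.
  apply (Rmult_lt_compat_r ((bY - uy) * Xs)) in Hcond; [| nra].
  replace ((bY - beta * K) / (bY - uy) * ((bY - uy) * Xs)) with ((bY - beta * K) * Xs)
    in Hcond by (field; lra).
  replace (K / Xs * ((bY - uy) * Xs)) with (K * (bY - uy)) in Hcond by (field; lra).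
  replace ((beta * K - bY) * Xs / bY + K * (bY - uy) / bY)
    with ((K * (bY - uy) - (bY - beta * K) * Xs) / bY) by (field; lra).
  apply Rdiv_lt_0_compat; lra.
Qed.

End Model.

Theorem theorem1 (bx bY ux uy K beta e : R)
  (hbx : 0 < bx) (hbY : 0 < bY) (hux : 0 < ux) (huy : 0 < uy)
  (hK : 0 < K) (hbeta : 0 < beta) (he : 0 < e)
  (huyux : uy > ux) (hbxe : bx >= bY + e) :
  let f := fX bx bY ux uy K beta e in
  let g := fY bx bY ux uy K beta e in
  (* (i) *)
  ((bx < ux /\ bY < uy) -> loc_asym_stable f g 0 0) /\
  (* (ii) *)
  (bx > ux ->
     (Rnought bx bY ux uy K beta e < 1 -> loc_asym_stable f g (Xbar bx bY ux uy K beta e) 0) /\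
     (Rnought bx bY ux uy K beta e > 1 -> unstable f g (Xbar bx bY ux uy K beta e) 0)) /\
  (* (iii) *)
  ((bx > ux /\ bY > uy /\ bY > beta * K /\
    K / Xstar bx bY ux uy K beta e > (bY - beta * K) / (bY - uy)) ->
     loc_asym_stable f g (Xstar bx bY ux uy K beta e) (Ystar bx bY ux uy K beta e)).
Proof.
  intros f g; subst f g; split; [| split].
  - intros [Hx Hy]; now apply origin_loc_asym_stable.
  - intros Hx; split.
    + now apply Xbar_loc_asym_stable.
    + now apply Xbar_unstable.
  - intros (_ & Hy & HbK & Hcond).
    apply interior_equilibrium_loc_asym_stable; try lra.
    + apply Xstar_pos; lra.
    + apply Ystar_pos; lra.
    + apply Xstar_Ystar_is_equilibrium; lra.
Qed.
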